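(* Let $X_A, X_B, X_M$ be finite sets and let the notepads and the mailbox be purely classical: $\mathcal{A}=\mathcal{C}(X_A)$, $\mathcal{B}=\mathcal{C}(X_B)$, $\mathcal{M}=\mathcal{C}(X_M)$. Then for every $\epsilon<\tfrac12$ there is no pair of strategies $(\sigma_A,\sigma_B)\in\Sigma_A(\mathcal{A},\mathcal{M})\times\Sigma_B(\mathcal{B},\mathcal{M})$ which is a weak coin tossing protocol with bias $\epsilon$ (and consequently none which is a strong coin tossing protocol with bias $\epsilon$).
   Context: Observable algebras. For a finite set $X=\{1,\dots,n\}$, $\mathcal{C}(X)\subset\mathcal{B}(\mathbb{C}^n)$ denotes the algebra of operators diagonal in a fixed orthonormal basis $\{|x\rangle\}_{x\in X}$ (a classical system). A (finite-dimensional) observable algebra is an algebra of the form $\mathcal{B}(\mathcal{H})\otimes\mathcal{C}(X)$ with $\mathcal{H}$ finite-dimensional and $X$ finite (quantum if $X$ is a singleton, classical if $\dim\mathcal{H}=1$, hybrid otherwise), viewed as a subalgebra of $\mathcal{B}(\mathcal{H}\otimes\mathbb{C}^{|X|})$. States of a system with observable algebra $\mathcal{A}$ are density operators (positive, trace one) belonging to $\mathcal{A}$. Operations are completely positive trace-preserving linear maps between observable algebras. An observable with outcomes in a finite set $Y$ on $\mathcal{A}$ is a family $(E^{(y)})_{y\in Y}$ of positive elements of $\mathcal{A}$ summing to $\mathbb{1}$. Protocol framework. Fix an even number $N$ of rounds. Alice has a private algebra $\mathcal{A}$, Bob a private algebra $\mathcal{B}$, and both share a public ''mailbox'' algebra $\mathcal{M}$.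 A strategy of Alice is a tuple $\sigma_A=(\rho_A^{(0)};T_A^{(2)},T_A^{(4)},\dots,T_A^{(N)};E_A)$ where $\rho_A^{(0)}$ is a state on $\mathcal{A}\otimes\mathcal{M}$, each $T_A^{(j)}:\mathcal{A}\otimes\mathcal{M}\to\mathcal{A}\otimes\mathcal{M}$ is an operation, and $E_A=(E_A^{(0)},E_A^{(1)},E_A^{(\emptyset)})$ is an observable on $\mathcal{A}$ with outcomes $\{0,1,\emptyset\}$. A strategy of Bob is $\sigma_B=(\rho_B^{(0)};T_B^{(1)},T_B^{(3)},\dots,T_B^{(N-1)};E_B)$ with $\rho_B^{(0)}$ a state on $\mathcal{B}$, operations $T_B^{(k)}:\mathcal{M}\otimes\mathcal{B}\to\mathcal{M}\otimes\mathcal{B}$ and an observable $E_B=(E_B^{(0)},E_B^{(1)},E_B^{(\emptyset)})$ on $\mathcal{B}$. The sets of such strategies are denoted $\Sigma_A(\mathcal{A},\mathcal{M})$ and $\Sigma_B(\mathcal{B},\mathcal{M})$. Given $\sigma_A,\sigma_B$, set $\rho^{(0)}=\rho_A^{(0)}\otimes\rho_B^{(0)}$ on $\mathcal{A}\otimes\mathcal{M}\otimes\mathcal{B}$ and $\rho^{(N)}=(T_A^{(N)}\otimes\mathrm{Id}_{\mathcal{B}})(\mathrm{Id}_{\mathcal{A}}\otimes T_B^{(N-1)})\cdots(T_A^{(2)}\otimes\mathrm{Id}_{\mathcal{B}})(\mathrm{Id}_{\mathcal{A}}\otimes T_B^{(1)})\rho^{(0)}$, and for $a,b\in\{0,1,\emptyset\}$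 define $\mathbb{P}(\sigma_A,\sigma_B;a,b)=\operatorname{tr}[(E_A^{(a)}\otimes\mathbb{1}\otimes E_B^{(b)})\rho^{(N)}]$. Definitions. A pair $(\sigma_A,\sigma_B)\in\Sigma_A(\mathcal{A},\mathcal{M})\times\Sigma_B(\mathcal{B},\mathcal{M})$ is a (strong) coin tossing protocol with bias $\epsilon\in[0,1/2]$ if (i) $\mathbb{P}(\sigma_A,\sigma_B;0,0)=\mathbb{P}(\sigma_A,\sigma_B;1,1)=1/2$; (ii) for every finite-dimensional observable algebra $\mathcal{R}$, every $\sigma_A'\in\Sigma_A(\mathcal{R},\mathcal{M})$ and every $x\in\{0,1\}$, $\mathbb{P}(\sigma_A',\sigma_B;x,x)\le 1/2+\epsilon$; (iii) for every finite-dimensional observable algebra $\mathcal{R}$, every $\sigma_B'\in\Sigma_B(\mathcal{R},\mathcal{M})$ and every $x\in\{0,1\}$, $\mathbb{P}(\sigma_A,\sigma_B';x,x)\le1/2+\epsilon$. It is a weak coin tossing protocol with bias $\epsilon$ if (i) holds and, for every finite-dimensional observable algebra $\mathcal{R}$, $\mathbb{P}(\sigma_A',\sigma_B;0,0)\le1/2+\epsilon$ for all $\sigma_A'\in\Sigma_A(\mathcal{R},\mathcal{M})$ and $\mathbb{P}(\sigma_A,\sigma_B';1,1)\le1/2+\epsilon$ for all $\sigma_B'\in\Sigma_B(\mathcal{R},\mathcal{M})$. *)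

From HB Require Import structures.
From mathcomp Require Import all_boot all_order all_algebra.
From mathcomp Require Import complex reals.
Set Implicit Arguments. Unset Strict Implicit. Unset Printing Implicit Defensive.
Import Order.TTheory GRing.Theory Num.Theory.
Local Open Scope ring_scope.

Section CoinTossing.
Variable R : realType.
Local Notation C := R[i].

Definition op (I : finType) := I -> I -> C.

Definition optr (I : finType) (A : op I) : C := \sum_(i : I) A i i.
Definition opmul (I : finType) (A B : op I) : op I :=
  fun i j => \sum_(k : I) A i k * B k j.
Definition opone (I : finType) : op I := fun i j => (i == j)%:R.
Definition psd (I : finType) (A : op I) : Prop :=
  forall v : I -> C, 0 <= \sum_(i : I) \sum_(j : I) (v i)^* * A i j * v j.

(* ---------- observable algebras ----------
   An algebra is described by an index type aI (an orthonormal basis of the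
   underlying Hilbert space) and a "classical label" akey : aI -> aK; the
   algebra consists of the operators that are block diagonal w.r.t. akey.
   B(H) (x) C(X) with H = C^H, X finite is  aI = H * X, akey = snd, and
   tensor products of such algebras are obtained with [tens]. *)
Record alg := Alg { aI : finType; aK : finType; akey : aI -> aK }.

Definition inA (a : alg) (A : op (aI a)) : Prop :=
  forall i j, akey i != akey j -> A i j = 0.

(* B(C^H) (x) C(X), viewed in B(C^H (x) C^X) *)
Definition obs (H X : finType) : alg := @Alg (H * X)%type X snd.
(* the classical algebra C(X) (dim H = 1) *)
Definition cl (X : finType) : alg := obs unit X.
Definition tens (a b : alg) : alg :=
  @Alg (aI a * aI b)%type (aK a * aK b)%type (fun p => (akey p.1, akey p.2)).

Definition state (a : alg) (rho : op (aI a)) : Prop :=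
  [/\ inA rho, psd rho & optr rho = 1].

(* the (k,l) block of an element of M_n(A) = M_n (x) A *)
Definition blk (n : nat) (I : finType) (P : op ('I_n * I)%type) (k l : 'I_n) : op I :=
  fun i j => P (k, i) (l, j).

(* operations: completely positive trace-preserving linear maps a -> b
   (only the restriction to the algebra a matters) *)
Definition operation (a b : alg) (T : op (aI a) -> op (aI b)) : Prop :=
  [/\ (forall A, inA A -> inA (T A)),
      (forall (c : C) A B, inA A -> inA B ->
          T (fun i j => c * A i j + B i j) = (fun i j => c * T A i j + T B i j)),
      (forall A, inA A -> optr (T A) = optr A) &
      (forall (n : nat) (P : op ('I_n * aI a)%type),
          (forall k l, inA (blk P k l)) -> psd P ->
          psd (fun p q => T (blk P p.1 q.1) p.2 q.2))].

(* outcomes {0,1,emptyset} are encoded as Some false, Some true, None *)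
Definition outcome := option bool.

Definition observable (a : alg) (E : outcome -> op (aI a)) : Prop :=
  (forall o, inA (E o) /\ psd (E o)) /\
  (fun i j => \sum_(o : outcome) E o i j) = @opone (aI a).

(* ---------- strategies (N = 2 n rounds) ----------
   Alice's operations T_A^(2), ..., T_A^(2n) are TA 0, ..., TA (n-1);
   Bob's operations T_B^(1), ..., T_B^(2n-1) are TB 0, ..., TB (n-1). *)
Record stratA (a m : alg) := StratA {
  rhoA : op (aI a * aI m)%type;
  TA : nat -> op (aI a * aI m)%type -> op (aI a * aI m)%type;
  EA : outcome -> op (aI a) }.

Record stratB (b m : alg) := StratB {
  rhoB : op (aI b);
  TB : nat -> op (aI m * aI b)%type -> op (aI m * aI b)%type;
  EB : outcome -> op (aI b) }.

Definition isStratA (n : nat) (a m : alg) (s : stratA a m) : Prop :=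
  [/\ state (a := tens a m) (rhoA s),
      (forall k, (k < n)%N -> operation (a := tens a m) (b := tens a m) (TA s k)) &
      observable (EA s)].

Definition isStratB (n : nat) (b m : alg) (s : stratB b m) : Prop :=
  [/\ state (rhoB s),
      (forall k, (k < n)%N -> operation (a := tens m b) (b := tens m b) (TB s k)) &
      observable (EB s)].

Section Evolution.
Variables (IA IM IB : finType).

(* T (x) Id_B  on  (A (x) M) (x) B *)
Definition liftA (T : op (IA * IM)%type -> op (IA * IM)%type)
  (X : op ((IA * IM) * IB)%type) : op ((IA * IM) * IB)%type :=
  fun p q => T (fun u v => X (u, p.2) (v, q.2)) p.1 q.1.

(* Id_A (x) T  on  (A (x) M) (x) B *)
Definition liftB (T : op (IM * IB)%type -> op (IM * IB)%type)
  (X : op ((IA * IM) * IB)%type) : op ((IA * IM) * IB)%type :=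
  fun p q => T (fun u v => X ((p.1.1, u.1), u.2) ((q.1.1, v.1), v.2))
               (p.1.2, p.2) (q.1.2, q.2).

End Evolution.

Section Run.
Variables (a m b : alg) (sA : stratA a m) (sB : stratB b m).

Definition rho0 : op ((aI a * aI m) * aI b)%type :=
  fun p q => rhoA sA p.1 q.1 * rhoB sB p.2 q.2.

(* evol k = (T_A^(2k) (x) Id)(Id (x) T_B^(2k-1)) ... (T_A^(2) (x) Id)(Id (x) T_B^(1)) rho0 *)
Fixpoint evol (k : nat) : op ((aI a * aI m) * aI b)%type :=
  match k with
  | 0 => rho0
  | k'.+1 => liftA (TA sA k') (liftB (TB sB k') (evol k'))
  end.

(* P(sigma_A, sigma_B; x, y) = tr[(E_A^(x) (x) 1 (x) E_B^(y)) rho^(N)],  N = 2 n *)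
Definition prob (n : nat) (x y : outcome) : C :=
  optr (opmul (fun p q => EA sA x p.1.1 q.1.1 * (p.1.2 == q.1.2)%:R * EB sB y p.2 q.2)
              (evol n)).
End Run.

Definition half : C := 2%:R^-1.

Definition weakCT (n : nat) (a b m : alg) (sA : stratA a m) (sB : stratB b m)
  (eps : R) : Prop :=
  [/\ 0 <= eps <= 2%:R^-1,
      prob sA sB n (Some false) (Some false) = half,
      prob sA sB n (Some true) (Some true) = half,
      (forall (H X : finType) (sA' : stratA (obs H X) m), isStratA n sA' ->
          prob sA' sB n (Some false) (Some false) <= half + (eps%:C)%C) &
      (forall (H X : finType) (sB' : stratB (obs H X) m), isStratB n sB' ->
          prob sA sB' n (Some true) (Some true) <= half + (eps%:C)%C)].

Definition strongCT (n : nat) (a b m : alg) (sA : stratA a m) (sB : stratB b m)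
  (eps : R) : Prop :=
  [/\ 0 <= eps <= 2%:R^-1,
      prob sA sB n (Some false) (Some false) = half,
      prob sA sB n (Some true) (Some true) = half,
      (forall (H X : finType) (sA' : stratA (obs H X) m) (x : bool), isStratA n sA' ->
          prob sA' sB n (Some x) (Some x) <= half + (eps%:C)%C) &
      (forall (H X : finType) (sB' : stratB (obs H X) m) (x : bool), isStratB n sB' ->
          prob sA sB' n (Some x) (Some x) <= half + (eps%:C)%C)].

End CoinTossing.

(* In a classical protocol every operation is a stochastic kernel, so a run
   is a Markov chain on (Alice's notepad, mailbox, Bob's notepad) in which,
   conditionally on the mailbox history, the two notepads stay independent.
   If the honest parties agree with certainty, this certainty passes to every
   branch of every round; at the end, certain agreement of two independent
   outputs means that Bob surely outputs 0 or Alice surely outputs 1. Running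
   this backwards through the rounds shows that the value of the game in which
   Alice tries to make Bob output 0 is 1, or the value of the game in which Bob
   tries to make Alice output 1 is 1. These values are attained by cheaters that
   store the history of received messages in their notepad and recompute the
   honest opponent's conditional distribution, so one party can bias the coin
   with certainty and no bias below 1/2 is possible. *)

From Pilot Require Import Defs.
From HB Require Import structures.
From mathcomp Require Import all_boot all_order all_algebra.
From mathcomp Require Import complex reals boolp.
From mathcomp Require Import ring lra.
Import Order.TTheory GRing.Theory Num.Theory.
Local Open Scope ring_scope.
Set Implicit Arguments. Unset Strict Implicit. Unset Printing Implicit Defensive.

(* [ring] fails on boolean casts [b%:R]; abstract them as atoms first. *)
Ltac ring_indicators :=
  repeat match goal with |- context [ (nat_of_bool ?b)%:R ] =>
    let c := fresh "c" in set c := (nat_of_bool b)%:R; clearbody c end;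
  ring.

Lemma sum_indicator (S : pzSemiRingType) (I : finType) (j : I) (F : I -> S) :
  \sum_i (i == j)%:R * F i = F j.
Proof.
rewrite (bigD1 j) //= eqxx mul1r big1 ?addr0 // => i /negbTE ->.
by rewrite mul0r.
Qed.

Lemma sum_pair (V : nmodType) (I J : finType) (F : I * J -> V) :
  \sum_p F p = \sum_i \sum_j F (i, j).
Proof. by rewrite pair_big; apply: eq_bigr => -[]. Qed.

Lemma sum_unit (V : nmodType) (F : unit -> V) : \sum_u F u = F tt.
Proof. by rewrite (bigD1 tt) //= big_pred0 ?addr0 // => -[]. Qed.

Lemma ler_sum_eq (R : numDomainType) (I : finType) (F G : I -> R) :
  (forall i, F i <= G i) -> \sum_i F i = \sum_i G i -> forall i, F i = G i.
Proof.
move=> FG SFG i; apply/eqP; rewrite eq_sym -subr_eq0; apply/eqP.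
have sum0 : \sum_j (G j - F j) = 0 by rewrite sumrB SFG subrr.
by apply: (psumr_eq0P _ sum0) => // j _; rewrite subr_ge0.
Qed.

(* Two independent parties with total weights [U], [V] output 0 with weights
   [p0], [q0] and 1 with weights [p1], [q1]; certain agreement forces Bob to
   output 0 surely or Alice to output 1 surely. *)
Lemma agreement_dichotomy (R : realFieldType) (p0 p1 q0 q1 U V : R) :
  0 <= p0 -> 0 <= p1 -> 0 <= q0 -> 0 <= q1 ->
  p0 + p1 <= U -> q0 + q1 <= V -> p0 * q0 + p1 * q1 = U * V ->
  V <= q0 \/ U <= p1.
Proof.
move=> p00 p10 q00 q10 hU hV E.
case: (lerP V q0) => hv; first by left.
right; case: (lerP U p1) => // hu; exfalso.
have h1 : 0 < (U - p1) * (V - q0) by apply: mulr_gt0; rewrite subr_gt0.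
have h2 : p1 * q1 <= p1 * (V - q0) by apply: ler_wpM2l => //; lra.
have h3 : p0 * q0 <= (U - p1) * q0 by apply: ler_wpM2r => //; lra.
have h4 : 0 <= p1 * q0 by apply: mulr_ge0.
lra.
Qed.

Section ClassicalGame.
Variable R : realFieldType.
Variables A M B : finType.
Variable n : nat.
Variable m_dflt : M.
Variable kA : nat -> A * M -> A * M -> R.
Variable kB : nat -> M * B -> M * B -> R.
Variables (eA0 eA1 : A -> R) (eB0 eB1 : B -> R).

Definition mass (T : finType) (f : T -> R) := \sum_x f x.

Definition bob_post k m m' (v : B -> R) b' := \sum_b v b * kB k (m, b) (m', b').
Definition alice_post k m' m'' (u : A -> R) a'' := \sum_a u a * kA k (a, m') (a'', m'').

Definition best_msg (F : M -> R) : M := Order.arg_max m_dflt xpredT F.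

Lemma best_msg_ge (F : M -> R) m : F m <= F (best_msg F).
Proof. by rewrite /best_msg; case: arg_maxP => // i _; apply. Qed.

(* [force0_value j k m v] is the probability with which a cheating Alice who
   sees the mailbox can make Bob output 0, when round [k] starts with message
   [m] and Bob's notepad distributed as [v], and [j] rounds remain; similarly
   [force1_value] for a cheating Bob and Alice's output 1. Bob's rounds start
   by reading the mailbox, so Bob's value does not depend on the message. *)
Fixpoint force0_value j k m (v : B -> R) : R :=
  if j is j'.+1 then
    \sum_m' let v' := bob_post k m m' v in
      force0_value j' k.+1 (best_msg (fun m'' => force0_value j' k.+1 m'' v')) v'
  else \sum_b v b * eB0 b.

Fixpoint force1_value j k (u : A -> R) : R :=
  if j is j'.+1 then
    let G m' := \sum_m'' force1_value j' k.+1 (alice_post k m' m'' u) in G (best_msg G)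
  else \sum_a u a * eA1 a.

Definition cfg := (A * M * B)%type.

Definition bob_round k (d : cfg -> R) (p : cfg) : R :=
  \sum_(x : M * B) d ((p.1.1, x.1), x.2) * kB k x (p.1.2, p.2).
Definition alice_round k (d : cfg -> R) (p : cfg) : R :=
  \sum_(y : A * M) d (y, p.2) * kA k y p.1.
Definition play_round k d := alice_round k (bob_round k d).

Definition agree_weight (p : cfg) := eA0 p.1.1 * eB0 p.2 + eA1 p.1.1 * eB1 p.2.

Fixpoint agreement j k (d : cfg -> R) : R :=
  if j is j'.+1 then agreement j' k.+1 (play_round k d)
  else \sum_p d p * agree_weight p.

Definition split_dist (u : A -> R) m (v : B -> R) (p : cfg) :=
  u p.1.1 * (p.1.2 == m)%:R * v p.2.

Lemma mass_weighted_le (T : finType) (w e0 e1 : T -> R) :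
  (forall x, 0 <= w x) -> (forall x, e0 x + e1 x <= 1) ->
  \sum_x w x * e0 x + \sum_x w x * e1 x <= mass w.
Proof.
move=> w0 e_le1; rewrite -big_split; apply: ler_sum => x _ /=.
by rewrite -mulrDr -[leRHS]mulr1 ler_wpM2l.
Qed.

Lemma play_round_sum k (I : finType) (f : I -> cfg -> R) :
  play_round k (fun p => \sum_i f i p) = fun p => \sum_i play_round k (f i) p.
Proof.
rewrite /play_round /alice_round /bob_round; apply: funext => p /=.
transitivity (\sum_y \sum_i (\sum_x f i ((y.1, x.1), x.2) * kB k x (y.2, p.2)) * kA k y p.1).
  apply: eq_bigr => y _; rewrite -mulr_suml; congr (_ * _).
  by rewrite exchange_big; apply: eq_bigr => x _; rewrite mulr_suml.
by rewrite exchange_big.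
Qed.

Lemma agreement_sum j k (I : finType) (f : I -> cfg -> R) :
  agreement j k (fun p => \sum_i f i p) = \sum_i agreement j k (f i).
Proof.
elim: j k f => [|j IH] k f /=; last by rewrite play_round_sum IH.
rewrite (eq_bigr (fun p => \sum_i f i p * agree_weight p)); first by rewrite exchange_big.
by move=> p _; rewrite mulr_suml.
Qed.

Lemma play_round_split k u m v :
  play_round k (split_dist u m v) =
  fun p => \sum_m' \sum_m'' split_dist (alice_post k m' m'' u) m'' (bob_post k m m' v) p.
Proof.
apply: funext => p; rewrite /play_round /alice_round /bob_round /split_dist /=.
have bob_step (y : A * M) :
    \sum_(x : M * B) u y.1 * (x.1 == m)%:R * v x.2 * kB k x (y.2, p.2)
    = u y.1 * bob_post k m y.2 v p.2.
  rewrite sum_pair -(sum_indicator m (fun m0 => u y.1 * bob_post k m0 y.2 v p.2)).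
  apply: eq_bigr => m0 _; rewrite /bob_post !mulr_sumr; apply: eq_bigr => b _ /=; ring.
rewrite (eq_bigr (fun y => u y.1 * bob_post k m y.2 v p.2 * kA k y p.1)); last first.
  by move=> y _; rewrite bob_step.
rewrite sum_pair exchange_big /=; apply: eq_bigr => m' _.
rewrite (eq_bigr (fun m'' => (m'' == p.1.2)%:R *
                   (alice_post k m' m'' u p.1.1 * bob_post k m m' v p.2))); last first.
  by move=> m'' _; rewrite eq_sym; ring.
rewrite sum_indicator /alice_post mulr_suml; apply: eq_bigr => a _.
by rewrite -surjective_pairing; ring.
Qed.

Lemma agreement_split_step k j u m v :
  agreement j.+1 k (split_dist u m v) =
  \sum_m' \sum_m'' agreement j k.+1 (split_dist (alice_post k m' m'' u) m'' (bob_post k m m' v)).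
Proof.
rewrite /= play_round_split.
rewrite (agreement_sum j k.+1 (fun m' p => \sum_m'' split_dist _ m'' _ p)).
by apply: eq_bigr => m' _; rewrite agreement_sum.
Qed.

Lemma mass_split_dist u m v : \sum_p split_dist u m v p = mass u * mass v.
Proof.
rewrite sum_pair sum_pair /mass mulr_suml; apply: eq_bigr => a _.
rewrite -(sum_indicator m (fun m0 => u a * \sum_b v b)).
apply: eq_bigr => m0 _; rewrite /split_dist /= !mulr_sumr; apply: eq_bigr => b _; ring.
Qed.

Lemma agreement0_split k u m v : agreement 0 k (split_dist u m v) =
  (\sum_a u a * eA0 a) * (\sum_b v b * eB0 b) + (\sum_a u a * eA1 a) * (\sum_b v b * eB1 b).
Proof.
rewrite /= sum_pair sum_pair !mulr_suml -big_split /=; apply: eq_bigr => a _.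
rewrite (eq_bigr (fun m0 => (m0 == m)%:R * \sum_b u a * v b * agree_weight ((a, m), b))).
  by rewrite sum_indicator /agree_weight !mulr_sumr -big_split /=; apply: eq_bigr => b _; ring.
move=> m0 _; rewrite mulr_sumr; apply: eq_bigr => b _; rewrite /split_dist /=.
by case: eqP => [->|_]; ring.
Qed.

Hypothesis kA_ge0 : forall k x y, (k < n)%N -> 0 <= kA k x y.
Hypothesis kB_ge0 : forall k x y, (k < n)%N -> 0 <= kB k x y.
Hypothesis kA_sum : forall k x, (k < n)%N -> \sum_y kA k x y = 1.
Hypothesis kB_sum : forall k x, (k < n)%N -> \sum_y kB k x y = 1.
Hypotheses (eA0_ge0 : forall a, 0 <= eA0 a) (eA1_ge0 : forall a, 0 <= eA1 a).
Hypotheses (eB0_ge0 : forall b, 0 <= eB0 b) (eB1_ge0 : forall b, 0 <= eB1 b).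
Hypothesis eA_le1 : forall a, eA0 a + eA1 a <= 1.
Hypothesis eB_le1 : forall b, eB0 b + eB1 b <= 1.

Lemma bob_post_ge0 k m m' v b : (k < n)%N -> (forall b, 0 <= v b) ->
  0 <= bob_post k m m' v b.
Proof. by move=> kn v0; apply: sumr_ge0 => x _; rewrite mulr_ge0 ?kB_ge0. Qed.

Lemma alice_post_ge0 k m' m'' u a : (k < n)%N -> (forall a, 0 <= u a) ->
  0 <= alice_post k m' m'' u a.
Proof. by move=> kn u0; apply: sumr_ge0 => x _; rewrite mulr_ge0 ?kA_ge0. Qed.

Lemma mass_bob_post k m v : (k < n)%N -> \sum_m' mass (bob_post k m m' v) = mass v.
Proof.
move=> kn; rewrite /mass /bob_post.
transitivity (\sum_b v b * \sum_(y : M * B) kB k (m, b) y); last first.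
  by apply: eq_bigr => b _; rewrite kB_sum // mulr1.
rewrite (eq_bigr (fun m' => \sum_b v b * \sum_b' kB k (m, b) (m', b'))); last first.
  by move=> m' _; rewrite exchange_big; apply: eq_bigr => b _; rewrite mulr_sumr.
by rewrite exchange_big; apply: eq_bigr => b _; rewrite -mulr_sumr sum_pair.
Qed.

Lemma mass_alice_post k m' u : (k < n)%N -> \sum_m'' mass (alice_post k m' m'' u) = mass u.
Proof.
move=> kn; rewrite /mass /alice_post.
transitivity (\sum_a u a * \sum_(y : A * M) kA k (a, m') y); last first.
  by apply: eq_bigr => a _; rewrite kA_sum // mulr1.
rewrite (eq_bigr (fun m'' => \sum_a u a * \sum_a'' kA k (a, m') (a'', m''))); last first.
  by move=> m'' _; rewrite exchange_big; apply: eq_bigr => a _; rewrite mulr_sumr.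
by rewrite exchange_big; apply: eq_bigr => a _; rewrite -mulr_sumr sum_pair exchange_big.
Qed.

Lemma agreement0_split_le k u m v : (forall a, 0 <= u a) -> (forall b, 0 <= v b) ->
  agreement 0 k (split_dist u m v) <= mass u * mass v.
Proof.
move=> u0 v0; rewrite -(mass_split_dist u m v); apply: ler_sum => p _.
rewrite /split_dist /agree_weight -[leRHS]mulr1 ler_wpM2l ?mulr_ge0 //.
have := eA_le1 p.1.1; have := eB_le1 p.2.
have := eA0_ge0 p.1.1; have := eA1_ge0 p.1.1; have := eB0_ge0 p.2; have := eB1_ge0 p.2.
nra.
Qed.

Lemma agreement_split_le j k u m v : (k + j <= n)%N ->
  (forall a, 0 <= u a) -> (forall b, 0 <= v b) ->
  agreement j k (split_dist u m v) <= mass u * mass v.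
Proof.
elim: j k u m v => [|j IH] k u m v kjn u0 v0; first exact: agreement0_split_le.
have kn : (k < n)%N by apply: leq_trans kjn; rewrite addnS ltnS leq_addr.
rewrite agreement_split_step -(mass_bob_post m v kn) mulr_sumr.
apply: ler_sum => m' _; rewrite -(mass_alice_post m' u kn) mulr_suml.
apply: ler_sum => m'' _; apply: IH => [|a|b].
- by rewrite addSnnS.
- exact: alice_post_ge0.
- exact: bob_post_ge0.
Qed.

(* [agreement j k (split_dist u m v) = mass u * mass v] means certain
   agreement; by [agreement_split_le] it passes to every branch. *)
Lemma agreement_split_full j k u m v : (k + j.+1 <= n)%N ->
  (forall a, 0 <= u a) -> (forall b, 0 <= v b) ->
  agreement j.+1 k (split_dist u m v) = mass u * mass v ->
  forall m' m'', agreement j k.+1 (split_dist (alice_post k m' m'' u) m'' (bob_post k m m' v))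
                 = mass (alice_post k m' m'' u) * mass (bob_post k m m' v).
Proof.
move=> kjn u0 v0; have kn : (k < n)%N by apply: leq_trans kjn; rewrite addnS ltnS leq_addr.
have le_branch m' m'' : agreement j k.+1
      (split_dist (alice_post k m' m'' u) m'' (bob_post k m m' v))
    <= mass (alice_post k m' m'' u) * mass (bob_post k m m' v).
  apply: agreement_split_le => [|a|b].
  - by rewrite addSnnS.
  - exact: alice_post_ge0.
  - exact: bob_post_ge0.
rewrite agreement_split_step => full m' m''.
have row_mass m1 : \sum_m2 mass (alice_post k m1 m2 u) * mass (bob_post k m m1 v)
                   = mass u * mass (bob_post k m m1 v).
  by rewrite -mulr_suml mass_alice_post.
have row_full : forall m1, \sum_m2 agreement j k.+1
      (split_dist (alice_post k m1 m2 u) m2 (bob_post k m m1 v))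
    = \sum_m2 mass (alice_post k m1 m2 u) * mass (bob_post k m m1 v).
  apply: ler_sum_eq => [m1|]; first by apply: ler_sum => m2 _.
  rewrite full -(mass_bob_post m v kn) mulr_sumr.
  by apply: eq_bigr => m1 _; rewrite row_mass.
exact: ler_sum_eq (le_branch m') (row_full m') m''.
Qed.

Lemma agreement_split_force j k u m v : (k + j <= n)%N ->
  (forall a, 0 <= u a) -> (forall b, 0 <= v b) ->
  agreement j k (split_dist u m v) = mass u * mass v ->
  mass v <= force0_value j k m v \/ mass u <= force1_value j k u.
Proof.
elim: j k u m v => [|j IH] k u m v kjn u0 v0.
  have ge0 (T : finType) (w e : T -> R) :
      (forall x, 0 <= w x) -> (forall x, 0 <= e x) -> 0 <= \sum_x w x * e x.
    by move=> w0 e0; apply: sumr_ge0 => x _; rewrite mulr_ge0.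
  rewrite agreement0_split => full.
  apply: (agreement_dichotomy _ _ _ _ _ _ full); rewrite ?ge0 ?mass_weighted_le //.
move=> full; have kn : (k < n)%N by apply: leq_trans kjn; rewrite addnS ltnS leq_addr.
have branch := agreement_split_full kjn u0 v0 full.
case: (lerP (mass u) (force1_value j.+1 k u)) => [|lt_force1]; first by right.
left; rewrite /= -(mass_bob_post m v kn); apply: ler_sum => m' _.
pose v' := bob_post k m m' v.
suff [m'' le_v'] : exists m'', mass v' <= force0_value j k.+1 m'' v'.
  exact: le_trans le_v' (best_msg_ge (fun m'' => force0_value j k.+1 m'' v') m'').
pose u' m'' := alice_post k m' m'' u.
case: (boolP [forall m'', mass (u' m'') <= force1_value j k.+1 (u' m'')]).
  move=> /forallP le_u'; move: lt_force1; rewrite ltNge => /negP[].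
  pose G m1 := \sum_m'' force1_value j k.+1 (alice_post k m1 m'' u).
  apply: le_trans (best_msg_ge G m').
  by rewrite -(mass_alice_post m' u kn); apply: ler_sum => m'' _; apply: le_u'.
case/forallPn => m'' /negP not_le_u'; exists m''.
have := IH k.+1 _ m'' v' _ _ _ (branch m' m''); case => // [|a|b].
- by rewrite addSnnS.
- exact: alice_post_ge0.
- exact: bob_post_ge0.
Qed.

Variables (rA : A * M -> R) (rB : B -> R).
Hypotheses (rA_ge0 : forall x, 0 <= rA x) (rB_ge0 : forall b, 0 <= rB b).
Hypotheses (rA_sum : \sum_x rA x = 1) (rB_sum : \sum_b rB b = 1).

Fixpoint run k : cfg -> R :=
  if k is k'.+1 then play_round k' (run k') else fun p => rA p.1 * rB p.2.

Lemma agreement_run j k : agreement j k (run k) = agreement 0 (k + j) (run (k + j)).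
Proof. by elim: j k => [|j IH] k; rewrite ?addn0 //= IH addSnnS. Qed.

Lemma run0_split : run 0 = fun p => \sum_m0 split_dist (fun a => rA (a, m0)) m0 rB p.
Proof.
apply: funext => -[[a m] b] /=; rewrite -(sum_indicator m (fun m0 => rA (a, m0) * rB b)).
by apply: eq_bigr => m0 _; rewrite /split_dist /= eq_sym; ring.
Qed.

Theorem classical_forcing : \sum_p run n p * agree_weight p = 1 ->
  (exists m0, 1 <= force0_value n 0 m0 rB) \/
  1 <= \sum_m0 force1_value n 0 (fun a => rA (a, m0)).
Proof.
pose u m0 a := rA (a, m0).
have mass_u : \sum_m0 mass (u m0) = 1 by rewrite /mass exchange_big -sum_pair.
have u0 m0 a : 0 <= u m0 a by apply: rA_ge0.
move=> full; have full_split : forall m0,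
    agreement n 0 (split_dist (u m0) m0 rB) = mass (u m0) * mass rB.
  apply: ler_sum_eq => [m0|]; first exact: agreement_split_le.
  rewrite -agreement_sum -run0_split agreement_run add0n [LHS]/= full.
  by rewrite /mass rB_sum; under eq_bigr do rewrite mulr1.
case: (boolP [exists m0, 1 <= force0_value n 0 m0 rB]) => [/existsP|/existsPn not_force0].
  by left.
right; rewrite -mass_u; apply: ler_sum => m0 _.
have [] := agreement_split_force (k := 0) (leqnn n) (u0 m0) rB_ge0 (full_split m0) => //.
by rewrite /mass rB_sum => force0; move: (not_force0 m0); rewrite force0.
Qed.

End ClassicalGame.

Section Histories.
Variable R : comPzRingType.
Variable M : finType.
Variable n : nat.
Variable m_blank : M.

(* A history of the first rounds' messages; unused entries hold [m_blank]. *)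
Definition hist := {ffun 'I_n -> M}.

Definition record (h : hist) (k : nat) (m : M) : hist :=
  [ffun i : 'I_n => if nat_of_ord i == k then m else h i].
Definition hist_at (h : hist) (k : nat) : M :=
  if insub k is Some i then h i else m_blank.
Definition blank_from (k : nat) (h : hist) : bool :=
  [forall i : 'I_n, (k <= i)%N ==> (h i == m_blank)].
Definition blank_hist : hist := [ffun _ => m_blank].
Definition agree_upto (k : nat) (h h' : hist) := forall i : 'I_n, (i < k)%N -> h i = h' i.

Lemma hist_at_record h k m : (k < n)%N -> hist_at (record h k m) k = m.
Proof. by move=> kn; rewrite /hist_at insubT /= ffunE eqxx. Qed.

Lemma hist_at_agree k h h' : agree_upto k.+1 h h' -> hist_at h k = hist_at h' k.
Proof. by move=> hh'; rewrite /hist_at; case: insubP => [i _ ik|_] //; apply: hh'; rewrite ik. Qed.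

Lemma agree_upto_record k h m : agree_upto k (record h k m) h.
Proof. by move=> i ik; rewrite ffunE (ltn_eqF ik). Qed.

Lemma agree_uptoS k h h' : agree_upto k.+1 h h' -> agree_upto k h h'.
Proof. by move=> hh' i ik; apply: hh'; apply: ltnW. Qed.

Lemma blank_from0 h : blank_from 0 h = (h == blank_hist).
Proof.
apply/forallP/eqP => [h_blank|->]; last by move=> i; rewrite ffunE eqxx implybT.
by apply/ffunP => i; rewrite ffunE; move: (h_blank i) => /= /eqP.
Qed.

Lemma record_eq k (kn : (k < n)%N) h h2 m :
  (record h k m == h2) = (m == h2 (Ordinal kn)) && (record h k m_blank == record h2 k m_blank).
Proof.
apply/eqP/andP => [<-|[/eqP -> /eqP E]].
  rewrite ffunE eqxx; split => //; apply/eqP/ffunP => i; rewrite !ffunE.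
  by case: ifP => // _; rewrite ffunE => ->.
apply/ffunP => i; move/ffunP: E => /(_ i); rewrite !ffunE.
by case: ifP => // /eqP ik _; congr (h2 _); apply: val_inj.
Qed.

Lemma blank_record k h h2 : (k < n)%N ->
  blank_from k h && (record h k m_blank == record h2 k m_blank)
  = (h == record h2 k m_blank) && blank_from k.+1 h2.
Proof.
move=> kn; apply/andP/andP => [[/forallP h_blank /eqP E]|[/eqP -> /forallP h2_blank]].
  split.
    apply/eqP/ffunP => i; move/ffunP: E => /(_ i); rewrite !ffunE.
    by case: ifP => // /eqP ik _; move: (h_blank i); rewrite ik leqnn => /eqP.
  apply/forallP => i; apply/implyP => ki.
  move/ffunP: E => /(_ i); rewrite !ffunE (gtn_eqF ki) => <-.
  by move: (h_blank i) => /implyP; apply; apply: ltnW.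
split; last by apply/eqP/ffunP => i; rewrite !ffunE; case: ifP => // ->.
apply/forallP => i; apply/implyP; rewrite leq_eqVlt => /orP [/eqP ki|ki].
  by rewrite ffunE -ki eqxx.
by rewrite ffunE (gtn_eqF ki); move: (h2_blank i) => /implyP; apply.
Qed.

(* Recording the [k]-th message is a bijection between pairs (history blank
   from [k], message) and histories blank from [k+1]. *)
Lemma sum_record_hist k (kn : (k < n)%N) h2 (G : hist -> M -> R) :
  \sum_h \sum_m (blank_from k h)%:R * (record h k m == h2)%:R * G h m =
  (blank_from k.+1 h2)%:R * G (record h2 k m_blank) (hist_at h2 k).
Proof.
have at_k : hist_at h2 k = h2 (Ordinal kn) by rewrite /hist_at insubT.
transitivity (\sum_h (blank_from k h && (record h k m_blank == record h2 k m_blank))%:R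
                      * G h (h2 (Ordinal kn))).
  apply: eq_bigr => h _.
  rewrite (eq_bigr (fun m => (m == h2 (Ordinal kn))%:R * ((blank_from k h)%:R *
             (record h k m_blank == record h2 k m_blank)%:R * G h m))).
    by rewrite sum_indicator -mulnb natrM.
  by move=> m _; rewrite (record_eq kn) -mulnb natrM; ring_indicators.
rewrite (eq_bigr (fun h => (h == record h2 k m_blank)%:R *
                      ((blank_from k.+1 h2)%:R * G h (h2 (Ordinal kn))))).
  by rewrite sum_indicator at_k.
by move=> h _; rewrite blank_record // -mulnb natrM; ring_indicators.
Qed.

Lemma sum_record k (kn : (k < n)%N) (Q : hist -> R) :
  \sum_h (blank_from k h)%:R * \sum_m Q (record h k m) =
  \sum_h2 (blank_from k.+1 h2)%:R * Q h2.
Proof.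
transitivity (\sum_h2 \sum_h \sum_m (blank_from k h)%:R * (record h k m == h2)%:R * Q h2).
  rewrite exchange_big; apply: eq_bigr => h _; rewrite mulr_sumr exchange_big.
  apply: eq_bigr => m _.
  rewrite (eq_bigr (fun h2 => (h2 == record h k m)%:R * ((blank_from k h)%:R * Q h2))).
    by rewrite sum_indicator.
  by move=> h2 _; rewrite eq_sym; ring_indicators.
by apply: eq_bigr => h2 _; rewrite (sum_record_hist kn h2 (fun _ _ => Q h2)).
Qed.

Lemma sum_blank_shift (Q : nat -> hist -> R) :
  (forall k h, (k < n)%N -> blank_from k h -> Q k h = \sum_m Q k.+1 (record h k m)) ->
  \sum_h (h == blank_hist)%:R * Q 0%N h = \sum_h (blank_from n h)%:R * Q n h.
Proof.
move=> QS; under eq_bigr do rewrite -blank_from0.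
have shift j : forall k, (k + j = n)%N ->
    \sum_h (blank_from k h)%:R * Q k h = \sum_h (blank_from n h)%:R * Q n h.
  elim: j => [|j IH] k kjn; first by move: kjn; rewrite addn0 => ->.
  have kn : (k < n)%N by rewrite -kjn addnS ltnS leq_addr.
  rewrite -(IH k.+1); last by rewrite addSnnS.
  transitivity (\sum_h (blank_from k h)%:R * \sum_m Q k.+1 (record h k m)).
    apply: eq_bigr => h _.
    by case: (boolP (blank_from k h)) => hk; rewrite ?mul0r ?mul1r // (QS k h kn hk).
  exact: sum_record.
exact: shift n 0%N (add0n n).
Qed.

End Histories.

Definition fun_kernel (S : pzSemiRingType) (I : finType) (g : I -> I) (x y : I) : S :=
  (g x == y)%:R.
Arguments fun_kernel {S I} g x y.

Section CheatingAlice.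
Variable R : realFieldType.
Variables M B : finType.
Variable n : nat.
Variables m_blank m0 : M.
Variable kB : nat -> M * B -> M * B -> R.
Variable eB0 : B -> R.
Variable rB : B -> R.

Local Notation hist := (hist M n).
Local Notation hist_at := (hist_at m_blank).
Local Notation blank_from := (blank_from m_blank).
Local Notation force0_value := (force0_value m_blank kB eB0).

(* Cheating Alice tracks the message she posts and Bob's (unnormalised)
   notepad distribution conditioned on the history of his messages. *)
Fixpoint cheatA_state k (h : hist) : M * (B -> R) :=
  if k is k'.+1 then
    let v' := bob_post kB k' (cheatA_state k' h).1 (hist_at h k') (cheatA_state k' h).2 in
    (best_msg m_blank (fun m'' => force0_value (n - k'.+1) k'.+1 m'' v'), v')
  else (m0, rB).

Definition cheatA_move k (y : unit * hist * M) : unit * hist * M :=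
  ((tt, record y.1.2 k y.2), (cheatA_state k.+1 (record y.1.2 k y.2)).1).
Definition cheatA_init (x : unit * hist * M) : R := (x == ((tt, blank_hist n m_blank), m0))%:R.

Lemma cheatA_state_agree k h h' : agree_upto k h h' -> cheatA_state k h = cheatA_state k h'.
Proof.
elim: k => [//|k IH] hh' /=.
by rewrite (IH (agree_uptoS hh')) (hist_at_agree m_blank hh').
Qed.

Local Notation runC := (run (fun k => fun_kernel (cheatA_move k)) kB cheatA_init rB).

Lemma run_cheatA k : (k <= n)%N -> forall p, runC k p =
  (blank_from k p.1.1.2)%:R * (p.1.2 == (cheatA_state k p.1.1.2).1)%:R *
  (cheatA_state k p.1.1.2).2 p.2.
Proof.
elim: k => [|k IH] kn [[[[] h] m] b] /=.
  by rewrite /cheatA_init (blank_from0 m_blank) -!pair_eqE /= -mulnb natrM.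
have bob_step h1 m' b' : \sum_(x : M * B) runC k (((tt, h1), x.1), x.2) * kB k x (m', b')
    = (blank_from k h1)%:R * bob_post kB k (cheatA_state k h1).1 m' (cheatA_state k h1).2 b'.
  rewrite sum_pair /=.
  rewrite (eq_bigr (fun m1 => (m1 == (cheatA_state k h1).1)%:R * ((blank_from k h1)%:R *
             \sum_b1 (cheatA_state k h1).2 b1 * kB k (m1, b1) (m', b')))).
    by rewrite sum_indicator /bob_post.
  move=> m1 _; rewrite !mulr_sumr; apply: eq_bigr => b1 _.
  by rewrite IH 1?ltnW //=; ring_indicators.
rewrite /play_round /alice_round /bob_round sum_pair sum_pair sum_unit /=.
rewrite (eq_bigr (fun h1 => \sum_m' (blank_from k h1)%:R * (record h1 k m' == h)%:R *
          ((m == (cheatA_state k.+1 h).1)%:R *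
           bob_post kB k (cheatA_state k h1).1 m' (cheatA_state k h1).2 b))); last first.
  move=> h1 _; apply: eq_bigr => m' _; rewrite bob_step /fun_kernel /cheatA_move !xpair_eqE /=.
  case: (eqVneq (record h1 k m') h) => [<-|_]; last by rewrite andFb !mulr0 mul0r.
  by rewrite eq_sym andTb mulr1; ring_indicators.
rewrite (sum_record_hist m_blank kn h (fun h1 m' => (m == (cheatA_state k.+1 h).1)%:R *
           bob_post kB k (cheatA_state k h1).1 m' (cheatA_state k h1).2 b)).
by rewrite (cheatA_state_agree (agree_upto_record (k := k) h m_blank)) /=; ring_indicators.
Qed.

Lemma cheatA_value : \sum_p runC n p * eB0 p.2 = force0_value n 0 m0 rB.
Proof.
pose Q k h := force0_value (n - k) k (cheatA_state k h).1 (cheatA_state k h).2.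
have QS k h : (k < n)%N -> blank_from k h -> Q k h = \sum_m Q k.+1 (record h k m).
  move=> kn _; rewrite /Q -(subnSK kn) /=; apply: eq_bigr => m' _.
  by rewrite (cheatA_state_agree (agree_upto_record (k := k) h m')) (hist_at_record m_blank).
transitivity (\sum_h (blank_from n h)%:R * Q n h); last first.
  by rewrite -(sum_blank_shift QS) sum_indicator /Q subn0.
rewrite !sum_pair sum_unit; apply: eq_bigr => h _.
rewrite /Q subnn /= (eq_bigr (fun m => (m == (cheatA_state n h).1)%:R * ((blank_from n h)%:R *
           \sum_b (cheatA_state n h).2 b * eB0 b))); first by rewrite sum_indicator.
by move=> m _; rewrite !mulr_sumr; apply: eq_bigr => b _; rewrite run_cheatA //=; ring_indicators.
Qed.

End CheatingAlice.

Section CheatingBob.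
Variable R : realFieldType.
Variables A M : finType.
Variable n : nat.
Variable m_blank : M.
Variable kA : nat -> A * M -> A * M -> R.
Variable eA1 : A -> R.
Variable rA : A * M -> R.

Local Notation hist := (hist M n).
Local Notation hist_at := (hist_at m_blank).
Local Notation blank_from := (blank_from m_blank).
Local Notation force1_value := (force1_value m_blank kA eA1).

Definition cheatB_choice k (u : A -> R) : M :=
  best_msg m_blank (fun m' => \sum_m'' force1_value (n - k.+1) k.+1 (alice_post kA k m' m'' u)).

(* Cheating Bob tracks Alice's (unnormalised) joint distribution of notepad
   and mailbox, conditioned on the history of her messages. *)
Fixpoint cheatB_state k (h : hist) : A * M -> R :=
  if k is k'.+1 then
    let u a := cheatB_state k' h (a, hist_at h k') in
    fun y => \sum_a u a * kA k' (a, cheatB_choice k' u) y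
  else rA.

Definition cheatB_msg k (h : hist) : M :=
  cheatB_choice k (fun a => cheatB_state k h (a, hist_at h k)).

Definition cheatB_move k (x : M * (unit * hist)) : M * (unit * hist) :=
  (cheatB_msg k (record x.2.2 k x.1), (tt, record x.2.2 k x.1)).
Definition cheatB_init (x : unit * hist) : R := (x == (tt, blank_hist n m_blank))%:R.

Lemma cheatB_state_agree k h h' : agree_upto k h h' -> cheatB_state k h = cheatB_state k h'.
Proof.
elim: k => [//|k IH] hh' /=.
by rewrite (IH (agree_uptoS hh')) (hist_at_agree m_blank hh').
Qed.

Local Notation runC := (run kA (fun k => fun_kernel (cheatB_move k)) rA cheatB_init).

Lemma run_cheatB k : (k <= n)%N -> forall p,
  runC k p = (blank_from k p.2.2)%:R * cheatB_state k p.2.2 p.1.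
Proof.
elim: k => [|k IH] kn [[a m] [[] h]] /=.
  by rewrite /cheatB_init (blank_from0 m_blank) xpair_eqE /=; ring_indicators.
have bob_step a1 m' h2 :
    \sum_(x : M * (unit * hist))
      runC k ((a1, x.1), x.2) * fun_kernel (cheatB_move k) x (m', (tt, h2))
    = (blank_from k.+1 h2)%:R * cheatB_state k h2 (a1, hist_at h2 k) * (cheatB_msg k h2 == m')%:R.
  rewrite sum_pair exchange_big /= sum_pair sum_unit.
  rewrite (eq_bigr (fun h1 => \sum_m1 (blank_from k h1)%:R * (record h1 k m1 == h2)%:R *
          (cheatB_state k h1 (a1, m1) * (cheatB_msg k h2 == m')%:R))); last first.
    move=> h1 _; apply: eq_bigr => m1 _.
    rewrite IH 1?ltnW //= /fun_kernel /cheatB_move !xpair_eqE /=.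
    case: (eqVneq (record h1 k m1) h2) => [<-|_]; last by rewrite andbF !mulr0 mul0r.
    by rewrite andbT eq_sym mulr1; ring_indicators.
  rewrite (sum_record_hist m_blank kn h2
    (fun h1 m1 => cheatB_state k h1 (a1, m1) * (cheatB_msg k h2 == m')%:R)).
  by rewrite (cheatB_state_agree (agree_upto_record (k := k) h2 m_blank)); ring_indicators.
rewrite /play_round /alice_round /bob_round sum_pair.
rewrite (eq_bigr (fun a1 => \sum_m' (blank_from k.+1 h)%:R * cheatB_state k h (a1, hist_at h k) *
            (cheatB_msg k h == m')%:R * kA k (a1, m') (a, m))); last first.
  by move=> a1 _; apply: eq_bigr => m' _; rewrite bob_step.
rewrite mulr_sumr; apply: eq_bigr => a1 _.
rewrite (eq_bigr (fun m' => (m' == cheatB_msg k h)%:R * ((blank_from k.+1 h)%:R *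
            cheatB_state k h (a1, hist_at h k) * kA k (a1, m') (a, m)))).
  by rewrite sum_indicator /cheatB_msg; ring_indicators.
by move=> m' _; rewrite eq_sym; ring_indicators.
Qed.

Lemma cheatB_value : \sum_p runC n p * eA1 p.1.1 = \sum_m force1_value n 0 (fun a => rA (a, m)).
Proof.
pose Q k h := \sum_m force1_value (n - k) k (fun a => cheatB_state k h (a, m)).
have QS k h : (k < n)%N -> blank_from k h -> Q k h = \sum_m Q k.+1 (record h k m).
  move=> kn _; rewrite /Q -(subnSK kn) /=; apply: eq_bigr => m _.
  by rewrite (cheatB_state_agree (agree_upto_record (k := k) h m)) (hist_at_record m_blank).
transitivity (\sum_h (blank_from n h)%:R * Q n h); last first.
  by rewrite -(sum_blank_shift QS) sum_indicator /Q subn0.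
rewrite sum_pair exchange_big sum_pair sum_unit /=; apply: eq_bigr => h _.
rewrite /Q subnn /= mulr_sumr sum_pair exchange_big; apply: eq_bigr => m _.
by rewrite mulr_sumr; apply: eq_bigr => a _; rewrite run_cheatB //=; ring_indicators.
Qed.

End CheatingBob.

Section ClassicalOperators.
Variable R : realType.
Local Notation C := R[i].
Local Notation op := (op R).

Lemma ge0_ReE (z : C) : 0 <= z -> (complex.Re z)%:C%C = z.
Proof. by move=> z0; rewrite RRe_real ?ger0_real. Qed.

Lemma Re_ge0 (z : C) : 0 <= z -> 0 <= complex.Re z.
Proof. by move=> z0; rewrite -ler0c ge0_ReE. Qed.

Lemma op_ext (I : finType) (P Q : op I) : (forall i j, P i j = Q i j) -> P = Q.
Proof. by move=> PQ; apply: funext => i; apply: funext => j. Qed.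

Definition diag_op (I : finType) (d : I -> C) : op I := fun i j => (i == j)%:R * d i.
Definition proj_op (I : finType) (x : I) : op I := diag_op (fun i => (i == x)%:R).
(* The transition kernel of a map on a classical algebra: the weight of [y]
   in the image of the point mass at [x]. *)
Definition op_kernel (I : finType) (T : op I -> op I) (x y : I) : C := T (proj_op x) y y.

Definition classical_alg (a : alg) := injective (@akey a).

Lemma inA_classicalP (a : alg) : classical_alg a -> forall P : op (aI a),
  inA P <-> (forall i j, i != j -> P i j = 0).
Proof.
move=> ca P; split => P0 i j ij; apply: P0; first by apply: contra ij => /eqP /ca ->.
by apply: contra ij => /eqP ->.
Qed.

Lemma inA_diag_op (a : alg) (d : aI a -> C) : classical_alg a -> inA (diag_op d).
Proof. by move=> ca; apply/(inA_classicalP ca) => i j /negbTE ij; rewrite /diag_op ij mul0r. Qed.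

Lemma classical_cl (X : finType) : classical_alg (cl X).
Proof. by move=> [[] x] [[] y] /= ->. Qed.

Lemma classical_tens a b : classical_alg a -> classical_alg b -> classical_alg (tens a b).
Proof. by move=> ca cb [x1 x2] [y1 y2] /= [/ca -> /cb ->]. Qed.

Lemma psd_diag_ge0 (I : finType) (P : op I) y : psd P -> 0 <= P y y.
Proof.
move=> /(_ (fun i => (i == y)%:R)).
rewrite (eq_bigr (fun i => (i == y)%:R * \sum_j P i j * (j == y)%:R)); last first.
  by move=> i _; rewrite mulr_sumr; apply: eq_bigr => j _; rewrite conjC_nat mulrA.
rewrite sum_indicator (eq_bigr (fun j => (j == y)%:R * P y j)) ?sum_indicator //.
by move=> j _; rewrite mulrC.
Qed.

Lemma psd_diag_op (I : finType) (d : I -> C) : (forall i, 0 <= d i) -> psd (diag_op d).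
Proof.
move=> d0 v; rewrite (eq_bigr (fun i => d i * (v i * (v i)^*))).
  by apply: sumr_ge0 => i _; rewrite mulr_ge0 // mul_conjC_ge0.
move=> i _; rewrite (eq_bigr (fun j => (j == i)%:R * ((v i)^* * d i * v j))).
  by rewrite sum_indicator; ring.
by move=> j _; rewrite /diag_op [j == i]eq_sym; ring_indicators.
Qed.

Section Operation.
Variable a : alg.
Hypothesis ca : classical_alg a.
Local Notation I := (aI a).
Variable T : op I -> op I.
Hypothesis opT : operation (a := a) (b := a) T.

Lemma operation0 : T (fun _ _ => 0) = fun _ _ => 0.
Proof.
have inA0 : inA (fun _ _ : I => 0 : C) by [].
case: opT => _ lin _ _; have := lin (-1) _ _ inA0 inA0.
have -> : (fun i j : I => (-1 : C) * 0 + 0) = (fun _ _ => 0).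
  by apply: op_ext => i j; rewrite mulr0 addr0.
move=> T0; apply: op_ext => i j; have /eqP := congr1 (fun f => f i j) T0.
by rewrite mulN1r addNr => /eqP.
Qed.

Lemma operation_sum (J : Type) (r : seq J) (d : J -> C) (P : J -> op I) :
  (forall j, inA (P j)) ->
  T (fun i k => \sum_(j <- r) d j * P j i k) = fun i k => \sum_(j <- r) d j * T (P j) i k.
Proof.
move=> inP; elim: r => [|j r IH].
  under [X in T X]op_ext do rewrite big_nil.
  by rewrite operation0; apply: op_ext => i k; rewrite big_nil.
under [X in T X]op_ext do rewrite big_cons.
case: opT => _ lin _ _; rewrite lin //; last first.
  by move=> i k nk; rewrite big1 // => j' _; rewrite inP // mulr0.
by rewrite IH; apply: op_ext => i k; rewrite big_cons.
Qed.

Lemma diag_op_sum (d : I -> C) : diag_op d = fun i k => \sum_x d x * proj_op x i k.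
Proof.
apply: op_ext => i k; rewrite /proj_op /diag_op.
rewrite (eq_bigr (fun x => (x == i)%:R * ((i == k)%:R * d x))).
  by rewrite sum_indicator mulrC.
by move=> x _; rewrite [x == i]eq_sym; ring_indicators.
Qed.

Lemma operation_proj x i k : T (proj_op x) i k = (i == k)%:R * op_kernel T x i.
Proof.
case: opT => inT _ _ _.
have /(inA_classicalP ca) T0 := inT _ (inA_diag_op (fun i => (i == x)%:R) ca).
by case: (eqVneq i k) => [->|ik]; rewrite ?mul1r // T0 // mul0r.
Qed.

Lemma operation_diag (d : I -> C) : T (diag_op d) = diag_op (fun y => \sum_x d x * op_kernel T x y).
Proof.
rewrite {1}diag_op_sum operation_sum => [|j]; last exact: inA_diag_op.
apply: op_ext => i k; rewrite /diag_op mulr_sumr; apply: eq_bigr => x _.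
by rewrite operation_proj; ring_indicators.
Qed.

(* Complete positivity applied to the 1x1 block matrix [proj_op x]. *)
Lemma op_kernel_ge0 x y : 0 <= op_kernel T x y.
Proof.
case: opT => _ _ _ cp.
pose P (p q : ('I_1 * I)%type) := proj_op x p.2 q.2.
have blkP k l : inA (blk P k l) by exact: inA_diag_op.
have psdP : psd P.
  move=> v; pose s := \sum_q (q.2 == x)%:R * v q.
  suff -> : \sum_p \sum_q (v p)^* * P p q * v q = s^* * s by rewrite mulrC mul_conjC_ge0.
  rewrite /s rmorph_sum mulr_suml; apply: eq_bigr => p _.
  rewrite mulr_sumr; apply: eq_bigr => q _; rewrite /P /proj_op /diag_op rmorphM rmorph_nat.
  by case: (eqVneq p.2 x) => [->|px]; [rewrite eq_sym|]; rewrite /=; ring_indicators.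
exact: psd_diag_ge0 (ord0, y) (cp 1%N P blkP psdP).
Qed.

Lemma op_kernel_sum x : \sum_y op_kernel T x y = 1.
Proof.
case: opT => _ _ tr _; have := tr _ (inA_diag_op (fun i => (i == x)%:R) ca).
rewrite /optr /op_kernel => ->; rewrite /proj_op /diag_op.
by rewrite (eq_bigr (fun i => (i == x)%:R * 1)) ?sum_indicator // => i _; rewrite eqxx mul1r mulr1.
Qed.

End Operation.

Definition fun_op (I : finType) (g : I -> I) (P : op I) : op I :=
  diag_op (fun y => \sum_x (g x == y)%:R * P x x).

Lemma op_kernel_fun_op (I : finType) (g : I -> I) x y : op_kernel (fun_op g) x y = fun_kernel g x y.
Proof.
rewrite /op_kernel /fun_op /diag_op /proj_op /diag_op eqxx mul1r.
rewrite (eq_bigr (fun z => (z == x)%:R * (g z == y)%:R)) ?sum_indicator // => z _.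
by rewrite eqxx mul1r mulrC.
Qed.

Lemma fun_op_quad (N : nat) (I : finType) (g : I -> I) (P : op ('I_N * I)%type)
    (v : ('I_N * I)%type -> C) :
  \sum_p \sum_q (v p)^* * fun_op g (blk P p.1 q.1) p.2 q.2 * v q =
  \sum_x \sum_k \sum_l (v (k, g x))^* * P (k, x) (l, x) * v (l, g x).
Proof.
rewrite sum_pair.
transitivity (\sum_k \sum_y \sum_l
    (v (k, y))^* * (\sum_x (g x == y)%:R * P (k, x) (l, x)) * v (l, y)).
  apply: eq_bigr => k _; apply: eq_bigr => y _; rewrite sum_pair; apply: eq_bigr => l _.
  rewrite (eq_bigr (fun z => (z == y)%:R *
             ((v (k, y))^* * (\sum_x (g x == y)%:R * P (k, x) (l, x)) * v (l, z)))).
    by rewrite sum_indicator.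
  by move=> z _; rewrite /fun_op /diag_op /blk /= [z == y]eq_sym; ring_indicators.
rewrite [RHS]exchange_big; apply: eq_bigr => k _.
transitivity (\sum_y \sum_x \sum_l (g x == y)%:R * ((v (k, y))^* * P (k, x) (l, x) * v (l, y))).
  apply: eq_bigr => y _; rewrite [RHS]exchange_big; apply: eq_bigr => l _.
  by rewrite mulr_sumr mulr_suml; apply: eq_bigr => x _; ring_indicators.
rewrite exchange_big; apply: eq_bigr => x _.
rewrite (eq_bigr (fun y => (y == g x)%:R * \sum_l (v (k, y))^* * P (k, x) (l, x) * v (l, y))).
  by rewrite sum_indicator.
by move=> y _; rewrite mulr_sumr eq_sym.
Qed.

Lemma psd_fun_op (N : nat) (I : finType) (g : I -> I) (P : op ('I_N * I)%type) : psd P ->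
  psd (fun p q => fun_op g (blk P p.1 q.1) p.2 q.2).
Proof.
move=> psdP v; rewrite fun_op_quad; apply: sumr_ge0 => x _.
pose w (r : ('I_N * I)%type) := (r.2 == x)%:R * v (r.1, g x).
have sum_w (F : ('I_N * I)%type -> C) : \sum_s F s * w s = \sum_l F (l, x) * v (l, g x).
  rewrite sum_pair; apply: eq_bigr => l _.
  rewrite (eq_bigr (fun i => (i == x)%:R * (F (l, x) * v (l, g x)))) ?sum_indicator //.
  move=> i _; rewrite /w /=.
  by case: (eqVneq i x) => [->|_]; [ring_indicators | rewrite !(mul0r, mulr0)].
have sum_wC (F : ('I_N * I)%type -> C) : \sum_r (w r)^* * F r = \sum_k (v (k, g x))^* * F (k, x).
  rewrite sum_pair; apply: eq_bigr => k _.
  rewrite (eq_bigr (fun i => (i == x)%:R * ((v (k, g x))^* * F (k, x)))) ?sum_indicator //.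
  move=> i _; rewrite /w /= rmorphM rmorph_nat /=.
  by case: (eqVneq i x) => [->|_]; [ring_indicators | rewrite !(mul0r, mulr0)].
suff -> : \sum_k \sum_l (v (k, g x))^* * P (k, x) (l, x) * v (l, g x)
           = \sum_r \sum_s (w r)^* * P r s * w s by exact: psdP.
under [RHS]eq_bigr do under eq_bigr do rewrite -mulrA.
under [RHS]eq_bigr do rewrite -mulr_sumr.
rewrite sum_wC; apply: eq_bigr => k _; rewrite sum_w mulr_sumr.
by apply: eq_bigr => l _; rewrite mulrA.
Qed.

Lemma fun_op_operation (a : alg) (g : aI a -> aI a) : classical_alg a ->
  operation (a := a) (b := a) (fun_op g).
Proof.
move=> ca; split => [P _|c P Q _ _|P _|N P _]; last exact: psd_fun_op.
- exact: inA_diag_op.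
- apply: op_ext => i j; rewrite /fun_op /diag_op.
  rewrite (eq_bigr (fun x => c * ((g x == i)%:R * P x x) + (g x == i)%:R * Q x x)).
    by rewrite big_split /= -mulr_sumr; ring_indicators.
  by move=> x _; ring_indicators.
- rewrite /optr /fun_op /diag_op.
  rewrite (eq_bigr (fun i => \sum_x (g x == i)%:R * P x x)); last by move=> i _; rewrite eqxx mul1r.
  rewrite exchange_big; apply: eq_bigr => x _.
  by rewrite (eq_bigr (fun i => (i == g x)%:R * P x x)) ?sum_indicator // => i _; rewrite eq_sym.
Qed.

End ClassicalOperators.

Section ClassicalStrategies.
Variable R : realType.
Local Notation C := R[i].
Local Notation op := (op R).

Definition re_diag (I : finType) (P : op I) (x : I) : R := complex.Re (P x x).
Definition re_kernel (I : finType) (T : op I -> op I) (x y : I) : R :=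
  complex.Re (op_kernel T x y).

Lemma state_re_diag (a : alg) (rho : op (aI a)) : classical_alg a -> state rho ->
  rho = diag_op (fun x => (re_diag rho x)%:C%C).
Proof.
move=> ca [/(inA_classicalP ca) off0 psd_rho _]; apply: op_ext => x y.
rewrite /diag_op; case: (eqVneq x y) => [<-|ne]; last by rewrite off0 // mul0r.
by rewrite mul1r ge0_ReE // psd_diag_ge0.
Qed.

Lemma state_re_diag_ge0 (a : alg) (rho : op (aI a)) : state rho -> forall x, 0 <= re_diag rho x.
Proof. by case=> _ psd_rho _ x; apply/Re_ge0/psd_diag_ge0. Qed.

Lemma state_re_diag_sum (a : alg) (rho : op (aI a)) : state rho -> \sum_x re_diag rho x = 1.
Proof.
case=> _ psd_rho tr1; apply: (@complexI R); rewrite rmorph_sum rmorph1 -tr1 /optr.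
by apply: eq_bigr => x _; rewrite /re_diag /= ge0_ReE // psd_diag_ge0.
Qed.

Lemma observable_re_diag_ge0 (a : alg) (E : outcome -> op (aI a)) :
  observable E -> forall o x, 0 <= re_diag (E o) x.
Proof. by case=> psdE _ o x; apply/Re_ge0/psd_diag_ge0; case: (psdE o). Qed.

Lemma observable_re_diag_le1 (a : alg) (E : outcome -> op (aI a)) : observable E ->
  forall x, re_diag (E (Some false)) x + re_diag (E (Some true)) x <= 1.
Proof.
move=> obsE x; have sum1 : \sum_o re_diag (E o) x = 1.
  case: obsE => psdE /(congr1 (fun f => f x x)) /= sumE.
  have sumE1 : \sum_o E o x x = 1 by rewrite sumE /opone eqxx.
  apply: (@complexI R); rewrite rmorph_sum rmorph1 -sumE1.
  by apply: eq_bigr => o _; rewrite /re_diag /= ge0_ReE //; case: (psdE o) => _ /psd_diag_ge0.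
rewrite -sum1 (bigD1 (Some false)) //= (bigD1 (Some true)) //= addrA lerDl.
by apply: sumr_ge0 => o _; apply: observable_re_diag_ge0.
Qed.

Section Kernel.
Variables (a : alg) (T : op (aI a) -> op (aI a)).
Hypotheses (ca : classical_alg a) (opT : operation (a := a) (b := a) T).

Lemma op_kernel_re x y : op_kernel T x y = (re_kernel T x y)%:C%C.
Proof. by rewrite ge0_ReE // op_kernel_ge0. Qed.

Lemma re_kernel_ge0 x y : 0 <= re_kernel T x y.
Proof. exact/Re_ge0/op_kernel_ge0. Qed.

Lemma re_kernel_sum x : \sum_y re_kernel T x y = 1.
Proof.
apply: (@complexI R); rewrite rmorph_sum rmorph1 -(op_kernel_sum ca opT x).
by apply: eq_bigr => y _; rewrite op_kernel_re.
Qed.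

End Kernel.

Section Evolution.
Variables (a m b : alg).
Hypotheses (ca : classical_alg a) (cm : classical_alg m) (cb : classical_alg b).

Lemma liftB_diag_op (T : op (aI m * aI b)%type -> op (aI m * aI b)%type)
  (opT : operation (a := tens m b) (b := tens m b) T) (D : (aI a * aI m)%type * aI b -> C) :
  liftB T (diag_op D) =
  diag_op (fun p => \sum_x D ((p.1.1, x.1), x.2) * op_kernel T x (p.1.2, p.2)).
Proof.
have cmb := classical_tens cm cb.
apply: op_ext => -[[a1 m1] b1] [[a2 m2] b2]; rewrite /liftB /=.
case: (eqVneq a1 a2) => [<-|ne].
  have -> : (fun u v : (aI m * aI b)%type => diag_op D (a1, u.1, u.2) (a1, v.1, v.2)) =
            diag_op (fun u => D ((a1, u.1), u.2)).
    by apply: op_ext => -[u1 u2] [v1 v2]; rewrite /diag_op /= !xpair_eqE eqxx.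
  by rewrite (operation_diag cmb opT) /diag_op /= !xpair_eqE eqxx.
have -> : (fun u v : (aI m * aI b)%type => diag_op D (a1, u.1, u.2) (a2, v.1, v.2)) =
          (fun _ _ => 0).
  by apply: op_ext => -[u1 u2] [v1 v2]; rewrite /diag_op /= !xpair_eqE (negbTE ne) mul0r.
by rewrite (operation0 opT) /diag_op /= !xpair_eqE (negbTE ne) mul0r.
Qed.

Lemma liftA_diag_op (T : op (aI a * aI m)%type -> op (aI a * aI m)%type)
  (opT : operation (a := tens a m) (b := tens a m) T) (D : (aI a * aI m)%type * aI b -> C) :
  liftA T (diag_op D) = diag_op (fun p => \sum_y D (y, p.2) * op_kernel T y p.1).
Proof.
have cam := classical_tens ca cm.
apply: op_ext => -[x1 b1] [x2 b2]; rewrite /liftA /=.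
case: (eqVneq b1 b2) => [<-|ne].
  have -> : (fun u v : (aI a * aI m)%type => diag_op D (u, b1) (v, b1)) =
            diag_op (fun u => D (u, b1)).
    by apply: op_ext => u v; rewrite /diag_op /= !xpair_eqE eqxx andbT.
  by rewrite (operation_diag cam opT) /diag_op /= !xpair_eqE eqxx andbT.
have -> : (fun u v : (aI a * aI m)%type => diag_op D (u, b1) (v, b2)) = (fun _ _ => 0).
  by apply: op_ext => u v; rewrite /diag_op /= !xpair_eqE (negbTE ne) andbF mul0r.
by rewrite (operation0 opT) /diag_op /= !xpair_eqE (negbTE ne) andbF mul0r.
Qed.

Variable n : nat.
Variables (sA : stratA R a m) (sB : stratB R b m).
Hypotheses (HA : isStratA n sA) (HB : isStratB n sB).

Definition markov_run : nat -> (aI a * aI m * aI b)%type -> R :=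
  run (fun k => re_kernel (TA sA k)) (fun k => re_kernel (TB sB k))
      (re_diag (rhoA sA)) (re_diag (rhoB sB)).

Lemma opA k : (k < n)%N -> operation (a := tens a m) (b := tens a m) (TA sA k).
Proof. by case: HA => _ opTA _; apply: opTA. Qed.

Lemma opB k : (k < n)%N -> operation (a := tens m b) (b := tens m b) (TB sB k).
Proof. by case: HB => _ opTB _; apply: opTB. Qed.

Lemma evol_markov_run k : (k <= n)%N -> evol sA sB k = diag_op (fun p => (markov_run k p)%:C%C).
Proof.
have [cam cmb] := (classical_tens ca cm, classical_tens cm cb).
elim: k => [|k IH] kn.
  have [[stA _ _] [stB _ _]] := (HA, HB).
  apply: op_ext => -[x1 b1] [x2 b2].
  rewrite /= /rho0 {1}(state_re_diag cam stA) {1}(state_re_diag cb stB) /diag_op /= xpair_eqE.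
  by rewrite rmorphM /= -mulnb natrM; ring_indicators.
rewrite /= IH 1?ltnW // (liftB_diag_op (opB kn)) (liftA_diag_op (opA kn)).
congr diag_op; apply: funext => p.
rewrite /markov_run /= /play_round /alice_round /bob_round rmorph_sum; apply: eq_bigr => y _.
rewrite (op_kernel_re cam (opA kn)) rmorphM rmorph_sum; congr (_ * _); apply: eq_bigr => x _.
by rewrite (op_kernel_re cmb (opB kn)) rmorphM.
Qed.

Lemma prob_markov_run x y : prob sA sB n x y =
  (\sum_p re_diag (EA sA x) p.1.1 * re_diag (EB sB y) p.2 * markov_run n p)%:C%C.
Proof.
have [[_ _ [psdEA _]] [_ _ [psdEB _]]] := (HA, HB).
rewrite /prob evol_markov_run // /optr rmorph_sum; apply: eq_bigr => p _.
rewrite /opmul /diag_op (eq_bigr (fun k => (k == p)%:R * (EA sA x p.1.1 k.1.1 *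
         (p.1.2 == k.1.2)%:R * EB sB y p.2 k.2 * (markov_run n k)%:C%C))); last first.
  by move=> k _; ring_indicators.
rewrite sum_indicator eqxx mulr1 !rmorphM /= /re_diag !ge0_ReE //.
- by case: (psdEB y) => _ /psd_diag_ge0.
- by case: (psdEA x) => _ /psd_diag_ge0.
Qed.

End Evolution.

Definition point_state (I : finType) (x0 : I) : op I := diag_op (fun x => (x == x0)%:R).
Definition sure_observable (I : finType) (o0 : outcome) : outcome -> op I :=
  fun o => if o == o0 then @opone R I else fun _ _ => 0.

Lemma point_state_state (a : alg) (x0 : aI a) : classical_alg a -> state (point_state x0).
Proof.
move=> ca; split; [exact: inA_diag_op | by apply: psd_diag_op => i; rewrite ler0n|].
rewrite /optr /point_state /diag_op.
by rewrite (eq_bigr (fun i => (i == x0)%:R * 1)) ?sum_indicator // => i _; rewrite eqxx mul1r mulr1.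
Qed.

Lemma sure_observable_observable (a : alg) (o0 : outcome) : classical_alg a ->
  observable (@sure_observable (aI a) o0).
Proof.
move=> ca; split => [o|]; rewrite /sure_observable.
  case: (o == o0); last first.
    by split => // v; rewrite big1 // => i _; rewrite big1 // => j _; rewrite mulr0 mul0r.
  have -> : @opone R (aI a) = diag_op (fun _ => 1).
    by apply: op_ext => i j; rewrite /opone /diag_op mulr1.
  by split; [exact: inA_diag_op | apply: psd_diag_op => i; exact: ler01].
apply: op_ext => i j; rewrite (bigD1 o0) //= eqxx big1 ?addr0 // => o /negbTE ->.
by [].
Qed.

Lemma re_diag_point_state (I : finType) (x0 : I) : re_diag (point_state x0) = fun x => (x == x0)%:R.
Proof.
by apply: funext => x; rewrite /re_diag /point_state /diag_op eqxx mul1r; case: (x == x0).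
Qed.

Lemma re_kernel_fun_op (I : finType) (g : I -> I) : re_kernel (fun_op g) = fun_kernel g.
Proof.
apply: funext => x; apply: funext => y.
by rewrite /re_kernel op_kernel_fun_op /fun_kernel; case: (g x == y).
Qed.

Lemma re_diag_sure_observable (I : finType) (o0 : outcome) x :
  re_diag (@sure_observable I o0 o0) x = 1.
Proof. by rewrite /re_diag /sure_observable eqxx /opone eqxx. Qed.

Definition fun_stratA (a m : alg) (x0 : aI a * aI m) (g : nat -> aI a * aI m -> aI a * aI m)
  (o0 : outcome) : stratA R a m :=
  StratA (point_state x0) (fun k => fun_op (g k)) (@sure_observable (aI a) o0).

Definition fun_stratB (b m : alg) (x0 : aI b) (g : nat -> aI m * aI b -> aI m * aI b)
  (o0 : outcome) : stratB R b m :=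
  StratB (point_state x0) (fun k => fun_op (g k)) (@sure_observable (aI b) o0).

Lemma fun_stratA_strat n (a m : alg) x0 g o0 : classical_alg a -> classical_alg m ->
  isStratA n (@fun_stratA a m x0 g o0).
Proof.
move=> ca cm; have cam := classical_tens ca cm.
split; [exact: point_state_state | move=> k _; exact: fun_op_operation |].
exact: sure_observable_observable.
Qed.

Lemma fun_stratB_strat n (b m : alg) x0 g o0 : classical_alg b -> classical_alg m ->
  isStratB n (@fun_stratB b m x0 g o0).
Proof.
move=> cb cm; have cmb := classical_tens cm cb.
split; [exact: point_state_state | move=> k _; exact: fun_op_operation |].
exact: sure_observable_observable.
Qed.

End ClassicalStrategies.

Lemma half_realE (R : realType) : Defs.half R = (((2%:R)^-1 : R)%:C)%C.
Proof. by rewrite /Defs.half fmorphV rmorph_nat. Qed.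

Section ClassicalCheating.
Variable R : realType.
Variable n : nat.
Variables XA XB XM : finType.
Local Notation M := (aI (cl XM)).
Local Notation H := (hist M n).
Variables (sA : stratA R (cl XA) (cl XM)) (sB : stratB R (cl XB) (cl XM)).
Hypotheses (HA : isStratA n sA) (HB : isStratB n sB).

Local Notation kA k := (re_kernel (TA sA k)).
Local Notation kB k := (re_kernel (TB sB k)).
Local Notation eA o := (re_diag (EA sA o)).
Local Notation eB o := (re_diag (EB sB o)).
Local Notation rA := (re_diag (rhoA sA)).
Local Notation rB := (re_diag (rhoB sB)).

Let cA := classical_cl (X := XA).
Let cB := classical_cl (X := XB).
Let cM := classical_cl (X := XM).
Let cH := classical_cl (X := H).

Lemma mailbox_nonempty : (0 < #|{: M}|)%N.
Proof.
rewrite lt0n; apply/negP => /eqP/card0_eq noM.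
have [stA _ _] := HA; have := state_re_diag_sum stA; rewrite sum_pair big1 => [/eqP|a _].
  by rewrite eq_sym oner_eq0.
by rewrite big1 // => m; have := noM m; rewrite !inE.
Qed.

Lemma honest_agreement :
  prob sA sB n (Some false) (Some false) = Defs.half R ->
  prob sA sB n (Some true) (Some true) = Defs.half R ->
  \sum_p markov_run sA sB n p *
    agree_weight (eA (Some false)) (eA (Some true)) (eB (Some false)) (eB (Some true)) p = 1.
Proof.
rewrite !(prob_markov_run cA cM cB HA HB) half_realE => /complexI P00 /complexI P11.
rewrite (eq_bigr (fun p => eA (Some false) p.1.1 * eB (Some false) p.2 * markov_run sA sB n p +
    eA (Some true) p.1.1 * eB (Some true) p.2 * markov_run sA sB n p)); last first.
  by move=> p _; rewrite /agree_weight; ring.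
by rewrite big_split /= P00 P11; field.
Qed.

Theorem classical_cheating :
  prob sA sB n (Some false) (Some false) = Defs.half R ->
  prob sA sB n (Some true) (Some true) = Defs.half R ->
  (exists2 sA' : stratA R (cl H) (cl XM), isStratA n sA' &
     1 <= prob sA' sB n (Some false) (Some false)) \/
  (exists2 sB' : stratB R (cl H) (cl XM), isStratB n sB' &
     1 <= prob sA sB' n (Some true) (Some true)).
Proof.
move=> P00 P11; have /card_gt0P [m_blank _] := mailbox_nonempty.
have [[stA _ obsA] [stB _ obsB]] := (HA, HB).
have [cAM cMB] := (classical_tens cA cM, classical_tens cM cB).
have := classical_forcing m_blank
  (fun k x y kn => re_kernel_ge0 cAM (opA HA kn) x y)
  (fun k x y kn => re_kernel_ge0 cMB (opB HB kn) x y)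
  (fun k x kn => re_kernel_sum cAM (opA HA kn) x)
  (fun k x kn => re_kernel_sum cMB (opB HB kn) x)
  (observable_re_diag_ge0 obsA _) (observable_re_diag_ge0 obsA _)
  (observable_re_diag_ge0 obsB _) (observable_re_diag_ge0 obsB _)
  (observable_re_diag_le1 obsA) (observable_re_diag_le1 obsB)
  (state_re_diag_ge0 stA) (state_re_diag_ge0 stB)
  (state_re_diag_sum stA) (state_re_diag_sum stB) (honest_agreement P00 P11).
case=> [[m0 force0]|force1]; [left|right].
- pose sA' := fun_stratA R (a := cl H) (m := cl XM) ((tt, blank_hist n m_blank), m0)
    (cheatA_move (n := n) m_blank m0 (fun k => kB k) (eB (Some false)) rB) (Some false).
  have HA' : isStratA n sA' by apply: fun_stratA_strat.
  exists sA' => //; rewrite (prob_markov_run cH cM cB HA' HB) lecR.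
  rewrite /markov_run /= re_diag_point_state.
  under eq_bigr do rewrite re_diag_sure_observable mul1r mulrC.
  under [X in run X]funext do rewrite re_kernel_fun_op.
  by rewrite cheatA_value.
- pose sB' := fun_stratB R (b := cl H) (m := cl XM) (tt, blank_hist n m_blank)
    (cheatB_move (n := n) m_blank (fun k => kA k) (eA (Some true)) rA) (Some true).
  have HB' : isStratB n sB' by apply: fun_stratB_strat.
  exists sB' => //; rewrite (prob_markov_run cA cM cH HA HB') lecR.
  rewrite /markov_run /= re_diag_point_state.
  under eq_bigr do rewrite re_diag_sure_observable mulr1 mulrC.
  under [X in run _ X]funext do rewrite re_kernel_fun_op.
  by rewrite cheatB_value.
Qed.

End ClassicalCheating.

Theorem mainTheorem1 (R : realType) (n : nat) (XA XB XM : finType) (eps : R) :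
  eps < 2%:R^-1 ->
  forall (sA : stratA R (cl XA) (cl XM)) (sB : stratB R (cl XB) (cl XM)),
    isStratA n sA -> isStratB n sB ->
    ~ weakCT n sA sB eps /\ ~ strongCT n sA sB eps.
Proof.
move=> eps_lt sA sB HA HB.
have no_bias (z : R[i]) : 1 <= z -> ~ (z <= Defs.half R + eps%:C%C).
  move=> z_ge1 z_le; have := le_trans z_ge1 z_le.
  by rewrite half_realE -rmorphD lecR; lra.
have cheat := classical_cheating HA HB.
split=> [[_ P00 P11 biasA biasB]|[_ P00 P11 biasA biasB]].
- case: (cheat P00 P11) => [[sA' HA' P1]|[sB' HB' P1]]; apply: (no_bias _ P1).
  + exact: biasA HA'.
  + exact: biasB HB'.
- case: (cheat P00 P11) => [[sA' HA' P1]|[sB' HB' P1]]; apply: (no_bias _ P1).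
  + exact: biasA false HA'.
  + exact: biasB true HB'.
Qed.
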